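(* Let $n\ge4$, $k=3$, and let $d$ be an integer. Then every allowable critical data set for type $(n,d,3)$ satisfies $C_{12}>0$.
   Context: Let $0<k<n$ and $d$ be integers. Write $d=na-t$ with integers $a,t$, $0\le t<n$, and $ka=l(n-k)+t+m$ with integers $l,m$, $0\le m<n-k$. A critical data set for type $(n,d,k)$ is a tuple $A_c=(\alpha_c,n_1,d_1,k_1,n_2,d_2,k_2)$ with integers $n_i\ge1$, $k_i\ge0$, $d_i$ such that $n_1+n_2=n$, $d_1+d_2=d$, $k_1+k_2=k$, $\frac{d_2}{n_2}>\frac{d_1}{n_1}$, $\frac{k_1}{n_1}>\frac{k_2}{n_2}$, and $\alpha_c=\frac{d_2n_1-d_1n_2}{n_2k_1-n_1k_2}$. It is allowable if moreover $\frac tk<\alpha_c<\frac{ln+t}{k}$, $d\ge\frac1k(n^2-1)-(n-k)$, $d_1\ge\frac1{k_1}(n_1^2-1)-(n_1-k_1)$, and either ($k_2=0$ and $n_2=1$) or ($k_2\ge1$ and $d_2\ge\frac1{k_2}(n_2^2-1)-(n_2-k_2)$). Define $C_{12}=-n_1n_2-d_2n_1+d_1n_2+k_1(d_2+n_2-k_2)$. *)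

From HB Require Import structures.
From mathcomp Require Import all_boot all_order all_algebra.
Set Implicit Arguments. Unset Strict Implicit. Unset Printing Implicit Defensive.
Import Order.TTheory GRing.Theory Num.Theory.
Local Open Scope ring_scope.

Definition Q (z : int) : rat := z%:~R.

Definition type_params (n d k a t l m : int) : Prop :=
  [/\ d = n * a - t, 0 <= t < n,
      k * a = l * (n - k) + t + m & 0 <= m < n - k].

Definition alpha_c (n1 d1 k1 n2 d2 k2 : int) : rat :=
  (Q d2 * Q n1 - Q d1 * Q n2) / (Q n2 * Q k1 - Q n1 * Q k2).

Definition critical_data_set (n d k : int) (alpha : rat)
    (n1 d1 k1 n2 d2 k2 : int) : Prop :=
  [/\ 1 <= n1 /\ 1 <= n2, 0 <= k1 /\ 0 <= k2,
      [/\ n1 + n2 = n, d1 + d2 = d & k1 + k2 = k],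
      Q d2 / Q n2 > Q d1 / Q n1 /\ Q k1 / Q n1 > Q k2 / Q n2 &
      alpha = alpha_c n1 d1 k1 n2 d2 k2].

Definition deg_bound (n d k : int) : Prop :=
  Q d >= (Q n ^+ 2 - 1) / Q k - (Q n - Q k).

(** Allowable critical data set, where t and l are the integers of
    [type_params] for the type (n,d,k). *)
Definition allowable (n d k t l : int) (alpha : rat)
    (n1 d1 k1 n2 d2 k2 : int) : Prop :=
  [/\ critical_data_set n d k alpha n1 d1 k1 n2 d2 k2,
      Q t / Q k < alpha < (Q l * Q n + Q t) / Q k,
      deg_bound n d k,
      deg_bound n1 d1 k1 &
      ((k2 = 0 /\ n2 = 1) \/ (1 <= k2 /\ deg_bound n2 d2 k2))].

Definition C12 (n1 d1 k1 n2 d2 k2 : int) : int :=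
  - n1 * n2 - d2 * n1 + d1 * n2 + k1 * (d2 + n2 - k2).

(* Put s := a + l.  The relations defining a, t, l, m give d = (n - 3) s + m
   and l n + t = 3 s - m, so after clearing denominators the upper bound
   alpha_c < (l n + t) / 3 becomes the linear bound 3 (n1 - k1) s + k1 m < 3 d1.
   Since k1 / n1 > k2 / n2 and k1 + k2 = 3, k1 is 1, 2 or 3.  For k1 = 3 that
   bound alone gives C12 > 0.  For k1 = 1, 2, with p := n1 - k1 and
   q := n2 - k2, the number 3 q C12 is p times the slack of the degree bound
   for (n2, d2, k2) plus a remainder that is positive because n1 / k1 < n2 / k2;
   the few small (n1, n2) left over follow from the degree bound for
   (n1, d1, k1) or from the slope condition d1 / n1 < d2 / n2. *)

From HB Require Import structures.
From mathcomp Require Import all_boot all_order all_algebra.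
From mathcomp Require Import zify ring.

Set Implicit Arguments.
Unset Strict Implicit.
Unset Printing Implicit Defensive.

Import Order.TTheory GRing.Theory Num.Theory.
Local Open Scope ring_scope.

Lemma Q_gt0 x : (0 < Q x) = (0 < x). Proof. by rewrite /Q ltr0z. Qed.

Lemma Q_divr_ltE a b c e : 0 < b -> 0 < e ->
  (Q a / Q b < Q c / Q e) = (a * e < c * b).
Proof.
move=> b_gt0 e_gt0.
rewrite ltr_pdivrMr ?Q_gt0 // mulrAC ltr_pdivlMr ?Q_gt0 //.
by rewrite /Q -!rmorphM ltr_int.
Qed.

Lemma deg_bound_int n d k : deg_bound n d k -> 0 < k ->
  n ^+ 2 - 1 - k * (n - k) <= k * d.
Proof.
move=> bound k_gt0; have kQ_gt0 : 0 < Q k by rewrite Q_gt0.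
move: bound; rewrite /deg_bound -(ler_pM2r kQ_gt0) mulrBl divfK ?gt_eqF //.
rewrite /Q -(ler_int rat) !(rmorphB, rmorphM, rmorphXn) /= rmorph1 expr2.
by rewrite [d%:~R * _]mulrC [(_ - _) * _]mulrC.
Qed.

Lemma type_params_split n d k a t l m : type_params n d k a t l m ->
  d = (n - k) * (a + l) + m /\ l * n + t = k * (a + l) - m.
Proof. by case=> -> _ eq_ka _; split; lia. Qed.

Lemma alpha_c_lt_upper n d k a t l m n1 d1 k1 n2 d2 k2 :
  type_params n d k a t l m -> 0 < n -> 0 < k ->
  [/\ n1 + n2 = n, d1 + d2 = d & k1 + k2 = k] ->
  0 < n2 * k1 - n1 * k2 ->
  alpha_c n1 d1 k1 n2 d2 k2 < (Q l * Q n + Q t) / Q k ->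
  k * (n1 - k1) * (a + l) + k1 * m < k * d1.
Proof.
move=> /type_params_split[eq_d eq_lnt] n_gt0 k_gt0 [eq_n eq_dd eq_k] den_gt0.
rewrite /alpha_c /Q -!rmorphM -!rmorphB -rmorphD -!/(Q _) Q_divr_ltE //.
have gapE : n * (k * d1 - k * (n1 - k1) * (a + l) - k1 * m)
    = (l * n + t) * (n2 * k1 - n1 * k2) - (d2 * n1 - d1 * n2) * k.
  have -> : n2 = n - n1 by lia.
  have -> : k2 = k - k1 by lia.
  have -> : d2 = (n - k) * (a + l) + m - d1 by lia.
  by rewrite eq_lnt; ring.
rewrite -subr_gt0 -gapE pmulr_rgt0 // subr_gt0; lia.
Qed.

Lemma C12_gt0_k1_3 n1 d1 d2 s m : 2 <= n1 -> 0 <= m ->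
  d1 + d2 = (n1 - 2) * s + m -> 3 * (n1 - 3) * s + 3 * m < 3 * d1 ->
  0 < C12 n1 d1 3 1 d2 0.
Proof.
move=> n1_ge2 m_ge0 deg_sum up.
have -> : C12 n1 d1 3 1 d2 0 = m + 1 + (n1 - 2) * (d1 - (n1 - 3) * s - m - 1).
  by rewrite /C12 (_ : d2 = (n1 - 2) * s + m - d1); [ring | lia].
have : 0 <= (n1 - 2) * (d1 - (n1 - 3) * s - m - 1) by apply: mulr_ge0; lia.
lia.
Qed.

Lemma C12_gt0_k1_1 n1 n2 d1 d2 s m : 1 <= n1 -> 2 * n1 < n2 -> 0 <= m ->
  d1 + d2 = (n1 + n2 - 3) * s + m -> 3 * (n1 - 1) * s + m < 3 * d1 ->
  deg_bound n2 d2 2 ->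
  0 < C12 n1 d1 1 n2 d2 2.
Proof.
move=> n1_ge1 slope_k m_ge0 deg_sum up /deg_bound_int/(_ isT) deg2.
have eq_d2 : d2 = (n1 + n2 - 3) * s + m - d1 by lia.
have [n1E | n1_ne1] := eqVneq n1 1.
  subst n1; rewrite /C12; have : 0 <= (d1 - 1) * n2 by apply: mulr_ge0; lia.
  lia.
pose p := n1 - 1; pose q := n2 - 2; pose u := 3 * d1 - 3 * p * s - m.
have deg_slack : 0 <= 6 * q * s + 4 * m - 2 * u - 3 * (q + 1) ^+ 2 - 6.
  by move: deg2; rewrite /u /p /q eq_d2; lia.
have C12_decomp : q * (3 * C12 n1 d1 1 n2 d2 2)
    = p * (6 * q * s + 4 * m - 2 * u - 3 * (q + 1) ^+ 2 - 6)
      + ((q + 2) * (q - 2 * p) * m + (2 * p + q * (p + q + 2)) * u + 9 * p - 6 * q).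
  by rewrite /C12 eq_d2 /u /p /q; ring.
have p_ge1 : 1 <= p by rewrite /p; lia.
have q_gt : 2 * p < q by rewrite /p /q; lia.
have u_ge1 : 1 <= u by rewrite /u /p; lia.
move: C12_decomp deg_slack; clearbody p q u => C12_decomp deg_slack.
have rest_gt0 : 0 < (q + 2) * (q - 2 * p) * m + (2 * p + q * (p + q + 2)) * u + 9 * p - 6 * q.
  have : 0 <= (q + 2) * (q - 2 * p) * m by apply: mulr_ge0 => //; apply: mulr_ge0; lia.
  have : 0 <= (2 * p + q * (p + q + 2)) * (u - 1).
    by apply: mulr_ge0; [apply: addr_ge0; [|apply: mulr_ge0] | ]; lia.
  have : 0 <= (q - 1) * (q - 3) by apply: mulr_ge0; lia.
  have : 0 <= p * q by apply: mulr_ge0; lia.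
  lia.
have slack_term : 0 <= p * (6 * q * s + 4 * m - 2 * u - 3 * (q + 1) ^+ 2 - 6).
  by apply: mulr_ge0; lia.
have : 0 < q * (3 * C12 n1 d1 1 n2 d2 2) by rewrite C12_decomp; lia.
by rewrite !pmulr_rgt0 //; lia.
Qed.

Lemma C12_gt0_k1_2_large n1 n2 d1 d2 s m :
  3 <= n1 -> 3 <= n2 -> n1 < 2 * n2 -> 0 <= m ->
  d1 + d2 = (n1 + n2 - 3) * s + m -> 3 * (n1 - 2) * s + 2 * m < 3 * d1 ->
  deg_bound n2 d2 1 ->
  0 < C12 n1 d1 2 n2 d2 1.
Proof.
move=> n1_ge3 n2_ge3 slope_k m_ge0 deg_sum up /deg_bound_int/(_ isT) deg2.
have eq_d2 : d2 = (n1 + n2 - 3) * s + m - d1 by lia.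
pose p := n1 - 2; pose q := n2 - 1; pose u := 3 * d1 - 3 * p * s - 2 * m.
have deg_slack : 0 <= 3 * q * s + m - u - 3 * q * (q + 1).
  by move: deg2; rewrite /u /p /q eq_d2; lia.
have C12_decomp : q * (3 * C12 n1 d1 2 n2 d2 1)
    = p * (3 * q * s + m - u - 3 * q * (q + 1))
      + ((q + 1) * (2 * q - p) * m + (p + q * (p + q + 1)) * u - 6 * q).
  by rewrite /C12 eq_d2 /u /p /q; ring.
have p_ge1 : 1 <= p by rewrite /p; lia.
have q_ge2 : 2 <= q by rewrite /q; lia.
have p_lt : p < 2 * q by rewrite /p /q; lia.
have u_ge1 : 1 <= u by rewrite /u /p; lia.
(* For m = 0, u = 3 (d1 - p s) is a positive multiple of 3. *)
have u_ge3 : m = 0 -> 3 <= u by move=> m0; rewrite /u /p m0 in u_ge1 *; lia.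
move: C12_decomp deg_slack u_ge3; clearbody p q u => C12_decomp deg_slack u_ge3.
have coef_ge0 : 0 <= p + q * (p + q + 1) by apply: addr_ge0; [|apply: mulr_ge0]; lia.
have rest_gt0 : 0 < (q + 1) * (2 * q - p) * m + (p + q * (p + q + 1)) * u - 6 * q.
  have [m0 | m_ne0] := eqVneq m 0.
    have : 0 <= (p + q * (p + q + 1)) * (u - 3) by apply: mulr_ge0; lia.
    have : 0 <= q * (p + q - 1) by apply: mulr_ge0; lia.
    rewrite m0; lia.
  have : 0 <= (q + 1) * (2 * q - p) * (m - 1) by apply: mulr_ge0; [apply: mulr_ge0|]; lia.
  have : 0 <= (p + q * (p + q + 1)) * (u - 1) by apply: mulr_ge0; lia.
  have : 0 <= q * (q - 2) by apply: mulr_ge0; lia.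
  lia.
have slack_term : 0 <= p * (3 * q * s + m - u - 3 * q * (q + 1)) by apply: mulr_ge0; lia.
have : 0 < q * (3 * C12 n1 d1 2 n2 d2 1) by rewrite C12_decomp; lia.
by rewrite !pmulr_rgt0 //; lia.
Qed.

Lemma C12_gt0_k1_2 n1 n2 d1 d2 s m :
  1 <= n1 -> 4 <= n1 + n2 -> n1 < 2 * n2 -> d1 * n2 < d2 * n1 -> 0 <= m ->
  d1 + d2 = (n1 + n2 - 3) * s + m -> 3 * (n1 - 2) * s + 2 * m < 3 * d1 ->
  deg_bound n1 d1 2 -> deg_bound n2 d2 1 ->
  0 < C12 n1 d1 2 n2 d2 1.
Proof.
move=> n1_ge1 n_ge4 slope_k slope_d m_ge0 deg_sum up deg1 deg2.
have [n1_le2 | n1_ge3] := lerP n1 2.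
  move/deg_bound_int/(_ isT): deg1 => deg1; move/deg_bound_int/(_ isT): deg2 => deg2.
  rewrite /C12; have [n1E | n1E] : n1 = 1 \/ n1 = 2 by lia.
    subst n1; have : 0 <= n2 * (n2 - 1) by apply: mulr_ge0; lia.
    have : 0 <= (d1 - 1) * n2 by apply: mulr_ge0; lia.
    lia.
  subst n1; have : 0 <= (d1 - 2) * n2 by apply: mulr_ge0; lia.
  lia.
have [n2_le2 | n2_ge3] := lerP n2 2.
  (* The only place where the slope condition d1 / n1 < d2 / n2 is needed. *)
  have [n1E n2E] : n1 = 3 /\ n2 = 2 by lia.
  subst n1 n2; rewrite /C12; lia.
by apply: (@C12_gt0_k1_2_large _ _ _ _ s m) => //; lia.
Qed.

Theorem proposition7p1 (n d a t l m : int) (alpha : rat)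
    (n1 d1 k1 n2 d2 k2 : int) :
  4 <= n ->
  type_params n d 3 a t l m ->
  allowable n d 3 t l alpha n1 d1 k1 n2 d2 k2 ->
  0 < C12 n1 d1 k1 n2 d2 k2.
Proof.
move=> n_ge4 tp [[[n1_ge1 n2_ge1] [k1_ge0 k2_ge0] [eq_n eq_d eq_k] [slope_d slope_k] ->]
  /andP[_ alpha_lt] _ deg1 deg2].
rewrite Q_divr_ltE ?(lt_le_trans ltr01) // in slope_d.
rewrite Q_divr_ltE ?(lt_le_trans ltr01) // in slope_k.
have n_gt0 : 0 < n by lia.
have den_gt0 : 0 < n2 * k1 - n1 * k2 by lia.
have up := alpha_c_lt_upper tp n_gt0 isT (And3 eq_n eq_d eq_k) den_gt0 alpha_lt.
have [_ _ _ /andP[m_ge0 _]] := tp.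
have deg_sum : d1 + d2 = (n1 + n2 - 3) * (a + l) + m.
  by have [eq_dd _] := type_params_split tp; lia.
have [k1E | [k1E | k1E]] : k1 = 1 \/ k1 = 2 \/ k1 = 3 by lia.
- have k2E : k2 = 2 by lia.
  subst k1 k2; case: deg2 => [[] // | [_ deg2]].
  by apply: (@C12_gt0_k1_1 _ _ _ _ (a + l) m) => //; lia.
- have k2E : k2 = 1 by lia.
  subst k1 k2; case: deg2 => [[] // | [_ deg2]].
  by apply: (@C12_gt0_k1_2 _ _ _ _ (a + l) m) => //; lia.
- have k2E : k2 = 0 by lia.
  subst k1 k2; case: deg2 => [[_ n2E] | [] //]; subst n2.
  by apply: (@C12_gt0_k1_3 _ _ _ (a + l) m) => //; lia.
Qed.
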